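(* Let $h:\mathbb R^n\to\mathbb R$, $h(x):=\|g_r(x)\|-g_0(x)$. For every $\delta>0$ there exist $\epsilon>0$ and a neighborhood $U$ of $\bar x$ such that for every $x_0\in U$ with $g_r(x_0)\neq0$, $|h(x_0)|<\epsilon\|g_r(x_0)\|$ and $\|\nabla h(x_0)\|\ge\delta$, there exists $\tilde x\in\mathbb R^n$ with $h(\tilde x)=0$ and $\|\tilde x-x_0\|\le 2|h(x_0)|/\delta$.
   Context: Let $n,m\ge1$ and let $g=(g_0,g_r):\mathbb R^n\to\mathbb R\times\mathbb R^m$ be $C^2$-smooth around a point $\bar x\in\mathbb R^n$ with $g(\bar x)=0$. (Note $h$ is $C^2$ near every point $x$ with $g_r(x)\ne0$ close to $\bar x$.) *)

From Stdlib Require Import Reals.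
From mathcomp Require Import all_boot.
Open Scope R_scope.

Definition vec (n : nat) := 'I_n -> R.

Definition vzero (n : nat) : vec n := fun _ => 0.
Definition vsub {n : nat} (x y : vec n) : vec n := fun i => x i - y i.
Definition vdot {n : nat} (x y : vec n) : R := \big[Rplus/0]_(i < n) (x i * y i).
Definition vnorm {n : nat} (x : vec n) : R := sqrt (vdot x x).

Definition has_grad {n : nat} (f : vec n -> R) (x v : vec n) : Prop :=
  forall eps, 0 < eps -> exists d, 0 < d /\
    forall y, vnorm (vsub y x) < d ->
      Rabs (f y - f x - vdot v (vsub y x)) <= eps * vnorm (vsub y x).

Definition C2_on {n : nat} (f : vec n -> R) (c : vec n) (r : R) : Prop :=
  exists (G : vec n -> vec n) (H : vec n -> 'I_n -> vec n),
    (forall x, vnorm (vsub x c) < r -> has_grad f x (G x)) /\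
    (forall x, vnorm (vsub x c) < r -> forall i : 'I_n,
        has_grad (fun y => G y i) x (H x i)) /\
    (forall x, vnorm (vsub x c) < r -> forall eps, 0 < eps -> exists d, 0 < d /\
        forall y, vnorm (vsub y c) < r -> vnorm (vsub y x) < d ->
          forall i j : 'I_n, Rabs (H y i j - H x i j) < eps).

Definition hfun {n m : nat} (g0 : vec n -> R) (gr : vec n -> vec m) (x : vec n) : R :=
  vnorm (gr x) - g0 x.

From HB Require Import structures.
From Stdlib Require Import Reals Lra Psatz FunctionalExtensionality ClassicalEpsilon.
From mathcomp Require Import all_boot.
Open Scope R_scope.

(* Near xbar, at a point x0 with a := g_r(x0) <> 0, h has the second-order model
   h(y) = h(x0) + <grad h(x0), y - x0> + O(|y - x0|^2), with constant
   O(1/|a|) + O(1); the 1/|a| is the curvature of the Euclidean norm at a.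
   Walking from x0 a distance T = 2|h(x0)|/delta along -sign(h(x0)) grad h(x0),
   the linear part moves h by at least T delta = 2|h(x0)| while the remainder stays
   below C T^2 <= |h(x0)| once |h(x0)| < eps |a| (and |a| = O(|x0 - xbar|) is small),
   so h changes sign on the segment and the intermediate value theorem gives the zero. *)

HB.instance Definition _ := Monoid.isComLaw.Build R 0 Rplus
  (fun x y z => esym (Rplus_assoc x y z)) Rplus_comm Rplus_0_l.
HB.instance Definition _ := Monoid.isMulLaw.Build R 0 Rmult Rmult_0_l Rmult_0_r.
HB.instance Definition _ :=
  Monoid.isAddLaw.Build R Rmult Rplus Rmult_plus_distr_r Rmult_plus_distr_l.

Section RealSums.
Context {I : finType}.
Implicit Types F G : I -> R.

Lemma sumR_le F G :
  (forall i, F i <= G i) -> \big[Rplus/0]_i F i <= \big[Rplus/0]_i G i.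
Proof. by move=> le_FG; apply: big_ind2 => //; [lra | move=> *; lra]. Qed.

Lemma sumR_ge0 F : (forall i, 0 <= F i) -> 0 <= \big[Rplus/0]_i F i.
Proof. by move=> F_ge0; apply: big_ind => //; [lra | move=> *; lra]. Qed.

Lemma Rabs_sumR_le F : Rabs (\big[Rplus/0]_i F i) <= \big[Rplus/0]_i Rabs (F i).
Proof.
apply: (big_ind2 (fun a b => Rabs a <= b)); first by rewrite Rabs_R0; lra.
  by move=> a b c d *; apply: Rle_trans (Rabs_triang _ _) _; lra.
by move=> i _; lra.
Qed.

Lemma sumR_term_le F j : (forall i, 0 <= F i) -> F j <= \big[Rplus/0]_i F i.
Proof.
move=> F_ge0; rewrite (bigD1 j) //= -[X in X <= _]Rplus_0_r; apply: Rplus_le_compat_l.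
by apply: big_ind => //; [lra | move=> *; lra].
Qed.

End RealSums.

Lemma sumR_const_ord n c : \big[Rplus/0]_(i < n) c = INR n * c.
Proof.
rewrite big_const_ord; elim: n => [|k IH]; first by rewrite /=; ring.
by rewrite S_INR /= IH; ring.
Qed.

Definition l1norm {n} (x : vec n) := \big[Rplus/0]_(i < n) Rabs (x i).

Section Vectors.
Context {n : nat}.
Implicit Types x y z : vec n.

Lemma vdot_sym x y : vdot x y = vdot y x.
Proof. by apply: eq_bigr => i _; ring. Qed.

Lemma vdot_linr x y z a b :
  vdot x (fun i => a * y i + b * z i) = a * vdot x y + b * vdot x z.
Proof. by rewrite /vdot !big_distrr -big_split /=; apply: eq_bigr => i _; ring. Qed.

Lemma vdot_subr x y z : vdot x (vsub y z) = vdot x y - vdot x z.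
Proof.
have -> : vsub y z = (fun i => 1 * y i + (-1) * z i).
  by apply: functional_extensionality => i; rewrite /vsub; ring.
by rewrite vdot_linr; ring.
Qed.

Lemma vdot_subl x y z : vdot (vsub y z) x = vdot y x - vdot z x.
Proof. by rewrite vdot_sym vdot_subr !(vdot_sym x). Qed.

Lemma vdot_scaler x y c : vdot x (fun i => c * y i) = c * vdot x y.
Proof. by rewrite /vdot big_distrr /=; apply: eq_bigr => i _; ring. Qed.

Lemma vdot_ge0 x : 0 <= vdot x x.
Proof. by apply: sumR_ge0 => i; nra. Qed.

Lemma vnorm_ge0 x : 0 <= vnorm x.
Proof. exact: sqrt_pos. Qed.

Lemma vnorm_sqr x : vnorm x * vnorm x = vdot x x.
Proof. by rewrite /vnorm sqrt_sqrt //; apply: vdot_ge0. Qed.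

Lemma sqr_comp_le x i : x i * x i <= vdot x x.
Proof. by apply: (sumR_term_le (fun i => x i * x i)) => j; nra. Qed.

Lemma Rabs_comp_le x i : Rabs (x i) <= vnorm x.
Proof.
rewrite -sqrt_Rsqr_abs /vnorm; apply: sqrt_le_1_alt; exact: sqr_comp_le.
Qed.

Lemma vnorm_eq0 x : vnorm x = 0 -> x = vzero n.
Proof.
move=> x0; apply: functional_extensionality => i; rewrite /vzero.
by have := Rabs_comp_le x i; rewrite x0; split_Rabs; lra.
Qed.

Lemma vnorm_gt0 x : x <> vzero n -> 0 < vnorm x.
Proof.
move=> x_neq0; have [/vnorm_eq0/x_neq0 []|] := Req_dec (vnorm x) 0.
by have := vnorm_ge0 x; lra.
Qed.

Lemma vdot_expand x y t :
  vdot (fun i => x i + t * y i) (fun i => x i + t * y i)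
  = vdot x x + 2 * t * vdot x y + t * t * vdot y y.
Proof.
by rewrite /vdot !big_distrr -!big_split /=; apply: eq_bigr => i _; ring.
Qed.

Lemma Cauchy_Schwarz x y : Rabs (vdot x y) <= vnorm x * vnorm y.
Proof.
rewrite -sqrt_Rsqr_abs /vnorm -sqrt_mult_alt; last exact: vdot_ge0.
apply: sqrt_le_1_alt; rewrite /Rsqr.
have [yy0 | yy_gt0] : vdot y y = 0 \/ 0 < vdot y y by have := vdot_ge0 y; lra.
  have y0 : y = vzero n by apply: vnorm_eq0; rewrite /vnorm yy0 sqrt_0.
  have -> : vdot x y = 0.
    by rewrite /vdot big1 // => i _; rewrite y0 /vzero; ring.
  by have := vdot_ge0 x; nra.
(* evaluate ||x + t y||^2 >= 0 at its minimiser t = - <x, y> / <y, y> *)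
have := vdot_ge0 (fun i => x i + (- (vdot x y / vdot y y)) * y i).
rewrite vdot_expand => q_ge0.
have : 0 <= vdot y y * (vdot x x + 2 * - (vdot x y / vdot y y) * vdot x y +
     - (vdot x y / vdot y y) * - (vdot x y / vdot y y) * vdot y y) by nra.
have -> : vdot y y * (vdot x x + 2 * - (vdot x y / vdot y y) * vdot x y +
     - (vdot x y / vdot y y) * - (vdot x y / vdot y y) * vdot y y)
   = vdot x x * vdot y y - vdot x y * vdot x y by field; lra.
lra.
Qed.

Lemma sqrt_le_of_sqr_le a b : 0 <= b -> a <= b * b -> sqrt a <= b.
Proof. by move=> b_ge0 le_ab; rewrite -(sqrt_square b) //; apply: sqrt_le_1_alt. Qed.

Lemma vnorm_add_le x y : vnorm (fun i => x i + y i) <= vnorm x + vnorm y.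
Proof.
apply: sqrt_le_of_sqr_le; first by have := vnorm_ge0 x; have := vnorm_ge0 y; lra.
have -> : (fun i => x i + y i) = (fun i => x i + 1 * y i).
  by apply: functional_extensionality => i; ring.
rewrite vdot_expand -!vnorm_sqr.
by have := Cauchy_Schwarz x y; have := Rle_abs (vdot x y); nra.
Qed.

Lemma vnorm_scale c x : vnorm (fun i => c * x i) = Rabs c * vnorm x.
Proof.
rewrite /vnorm vdot_scaler vdot_sym vdot_scaler -Rmult_assoc sqrt_mult_alt; last nra.
by rewrite -/(Rsqr c) sqrt_Rsqr_abs.
Qed.

Lemma l1norm_ge0 x : 0 <= l1norm x.
Proof. by apply: sumR_ge0 => i; apply: Rabs_pos. Qed.

Lemma l1norm_le_const x c : (forall i, Rabs (x i) <= c) -> l1norm x <= INR n * c.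
Proof. by move=> le_xc; rewrite -sumR_const_ord; apply: sumR_le. Qed.

Lemma vnorm_le_l1norm x : vnorm x <= l1norm x.
Proof.
apply: sqrt_le_of_sqr_le; first exact: l1norm_ge0.
rewrite /vdot {2}/l1norm Rmult_comm big_distrr; apply: sumR_le => i /=.
have := sumR_term_le (fun i => Rabs (x i)) i (fun j => Rabs_pos _).
rewrite -/(l1norm x); have := Rabs_pos (x i).
have -> : x i * x i = Rabs (x i) * Rabs (x i) by rewrite -Rabs_mult Rabs_right; nra.
nra.
Qed.

Lemma Rabs_vdot_le_l1norm x y : Rabs (vdot x y) <= l1norm x * vnorm y.
Proof.
apply: Rle_trans (Rabs_sumR_le _) _.
rewrite /l1norm Rmult_comm big_distrr; apply: sumR_le => i /=.
by rewrite Rabs_mult; have := Rabs_comp_le y i; have := Rabs_pos (x i); nra.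
Qed.

Lemma vsub_sym x y : vnorm (vsub x y) = vnorm (vsub y x).
Proof.
have -> : vsub x y = (fun i => -1 * vsub y x i).
  by apply: functional_extensionality => i; rewrite /vsub; ring.
by rewrite vnorm_scale Rabs_Ropp Rabs_R1; ring.
Qed.

Lemma vsub_triangle x y z : vnorm (vsub x z) <= vnorm (vsub x y) + vnorm (vsub y z).
Proof.
have -> : vsub x z = (fun i => vsub x y i + vsub y z i).
  by apply: functional_extensionality => i; rewrite /vsub; ring.
exact: vnorm_add_le.
Qed.

Lemma vsub0 x : vsub x (vzero n) = x.
Proof. by apply: functional_extensionality => i; rewrite /vsub /vzero; ring. Qed.

Lemma vnorm_sub_le x y : Rabs (vnorm x - vnorm y) <= vnorm (vsub x y).
Proof.
have := vsub_triangle x y (vzero n); have := vsub_triangle y x (vzero n).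
by rewrite !vsub0 (vsub_sym y x) => *; apply: Rabs_le; lra.
Qed.

Lemma vsub_self x : vnorm (vsub x x) = 0.
Proof.
have -> : vsub x x = (fun i => 0 * x i).
  by apply: functional_extensionality => i; rewrite /vsub; ring.
by rewrite vnorm_scale Rabs_R0; ring.
Qed.

End Vectors.

Definition ray {n} (x d : vec n) (t : R) : vec n := fun i => x i + t * d i.

Section Calculus.
Context {n : nat}.
Implicit Types x y z c d : vec n.

Lemma ray_sub x d s t : vsub (ray x d s) (ray x d t) = (fun i => (s - t) * d i).
Proof. by apply: functional_extensionality => i; rewrite /vsub /ray; ring. Qed.

Lemma ray_sub_base x d t : vsub (ray x d t) x = (fun i => t * d i).
Proof. by apply: functional_extensionality => i; rewrite /vsub /ray; ring. Qed.

Lemma ray0 x d : ray x d 0 = x.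
Proof. by apply: functional_extensionality => i; rewrite /ray; ring. Qed.

Lemma ray1 x y : ray x (vsub y x) 1 = y.
Proof. by apply: functional_extensionality => i; rewrite /ray /vsub; ring. Qed.

Lemma ray_derive (f : vec n -> R) x d t v :
  has_grad f (ray x d t) v -> derivable_pt_lim (fun s => f (ray x d s)) t (vdot v d).
Proof.
move=> grad_f eps eps_gt0; have d_ge0 := vnorm_ge0 d.
set e := eps / (vnorm d + 1).
have e_gt0 : 0 < e by apply: Rdiv_lt_0_compat; lra.
have e_d : e * vnorm d < eps.
  have : e * (vnorm d + 1) = eps by rewrite /e; field; lra.
  by nra.
have [r [r_gt0 near_f]] := grad_f e e_gt0.
have dr_gt0 : 0 < r / (vnorm d + 1) by apply: Rdiv_lt_0_compat; lra.
exists (mkposreal _ dr_gt0) => h h_neq0 /= h_small.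
have h_gt0 : 0 < Rabs h by apply: Rabs_pos_lt.
have step : vsub (ray x d (t + h)) (ray x d t) = (fun i => h * d i).
  by rewrite ray_sub; apply: functional_extensionality => i; ring_simplify (t + h - t).
have step_small : Rabs h * vnorm d < r.
  have -> : r = r / (vnorm d + 1) * (vnorm d + 1) by field; lra.
  by nra.
have := near_f (ray x d (t + h)) ltac:(by rewrite step vnorm_scale).
rewrite step vdot_scaler vnorm_scale => est.
have -> : (f (ray x d (t + h)) - f (ray x d t)) / h - vdot v d
   = (f (ray x d (t + h)) - f (ray x d t) - h * vdot v d) / h by field.
rewrite /Rdiv Rabs_mult Rabs_inv; apply: (Rmult_lt_reg_l (Rabs h)) => //.
have -> : forall A, Rabs h * (A * / Rabs h) = A by move=> A; field; lra.
by nra.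
Qed.

Lemma ray_in_ball x y c r t : vnorm (vsub x c) < r -> vnorm (vsub y c) < r ->
  0 <= t <= 1 -> vnorm (vsub (ray x (vsub y x) t) c) < r.
Proof.
move=> x_in y_in t01.
have -> : vsub (ray x (vsub y x) t) c = (fun i => (1 - t) * vsub x c i + t * vsub y c i).
  by apply: functional_extensionality => i; rewrite /vsub /ray; ring.
apply: Rle_lt_trans (vnorm_add_le (fun i => (1 - t) * vsub x c i) (fun i => t * vsub y c i)) _.
rewrite !vnorm_scale !Rabs_right; try lra.
by have [->|] := Req_dec t 0; [lra | nra].
Qed.

Lemma mean_value_ball (f : vec n -> R) (G : vec n -> vec n) c r x y :
  (forall z, vnorm (vsub z c) < r -> has_grad f z (G z)) ->
  vnorm (vsub x c) < r -> vnorm (vsub y c) < r ->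
  exists z, vnorm (vsub z c) < r /\ vnorm (vsub z x) <= vnorm (vsub y x) /\
    f y - f x = vdot (G z) (vsub y x).
Proof.
move=> grad_f x_in y_in; set d := vsub y x.
have [t [mvt t01]] := MVT_cor2 (fun s => f (ray x d s))
  (fun s => vdot (G (ray x d s)) d) 0 1 Rlt_0_1
  (fun s s01 => ray_derive _ _ _ _ _ (grad_f _ (ray_in_ball _ _ _ _ _ x_in y_in s01))).
exists (ray x d t); split; first by apply: ray_in_ball => //; lra.
split.
  by rewrite ray_sub_base vnorm_scale Rabs_right; [have := vnorm_ge0 d; nra | lra].
by move: mvt; rewrite /= ray0 ray1 => ->; ring.
Qed.

Lemma lipschitz_of_grad_bound (f : vec n -> R) (G : vec n -> vec n) c r K x y :
  (forall z, vnorm (vsub z c) < r -> has_grad f z (G z)) ->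
  (forall z, vnorm (vsub z c) < r -> l1norm (G z) <= K) ->
  vnorm (vsub x c) < r -> vnorm (vsub y c) < r ->
  Rabs (f y - f x) <= K * vnorm (vsub y x).
Proof.
move=> grad_f G_le x_in y_in.
have [z [z_in [_ ->]]] := mean_value_ball _ _ _ _ _ _ grad_f x_in y_in.
apply: Rle_trans (Rabs_vdot_le_l1norm _ _) _.
by apply: Rmult_le_compat_r; [apply: vnorm_ge0 | apply: G_le].
Qed.

Lemma taylor_of_grad_lipschitz (f : vec n -> R) (G : vec n -> vec n) c r L x y :
  0 <= L ->
  (forall z, vnorm (vsub z c) < r -> has_grad f z (G z)) ->
  (forall z w, vnorm (vsub z c) < r -> vnorm (vsub w c) < r ->
     l1norm (vsub (G w) (G z)) <= L * vnorm (vsub w z)) ->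
  vnorm (vsub x c) < r -> vnorm (vsub y c) < r ->
  Rabs (f y - f x - vdot (G x) (vsub y x)) <= L * (vnorm (vsub y x) * vnorm (vsub y x)).
Proof.
move=> L_ge0 grad_f G_lip x_in y_in.
have [z [z_in [zx_le ->]]] := mean_value_ball _ _ _ _ _ _ grad_f x_in y_in.
rewrite -vdot_subl; apply: Rle_trans (Rabs_vdot_le_l1norm _ _) _.
have := G_lip _ _ x_in z_in; have := vnorm_ge0 (vsub y x).
have := Rmult_le_compat_l _ _ _ L_ge0 zx_le; nra.
Qed.

End Calculus.

Definition quad_approx {n} (f : vec n -> R) (G : vec n -> vec n) (c : vec n) (r K : R) :=
  (forall y, vnorm (vsub y c) < r -> l1norm (G y) <= K) /\
  (forall x y, vnorm (vsub x c) < r -> vnorm (vsub y c) < r ->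
     Rabs (f y - f x - vdot (G x) (vsub y x)) <= K * (vnorm (vsub y x) * vnorm (vsub y x))).

Section QuadApprox.
Context {n : nat}.
Implicit Types (f : vec n -> R) (G : vec n -> vec n) (x y c : vec n).

Lemma quad_approx_mono f G c r K r' K' :
  quad_approx f G c r K -> r' <= r -> K <= K' -> quad_approx f G c r' K'.
Proof.
move=> [G_le taylor] le_r le_K; split=> [y y_in | x y x_in y_in].
  by have := G_le y ltac:(lra); lra.
have := taylor x y ltac:(lra) ltac:(lra); have := vnorm_ge0 (vsub y x); nra.
Qed.

Lemma quad_approx_lipschitz f G c r K x y : quad_approx f G c r K ->
  vnorm (vsub x c) < r -> vnorm (vsub y c) < r ->
  Rabs (f y - f x) <= K * (1 + 2 * r) * vnorm (vsub y x).
Proof.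
move=> [G_le taylor] x_in y_in.
have yx_lt : vnorm (vsub y x) < 2 * r.
  by have := vsub_triangle y c x; rewrite (vsub_sym c x); lra.
have lin := Rabs_vdot_le_l1norm (G x) (vsub y x).
have K_ge0 : 0 <= K by have := l1norm_ge0 (G x); have := G_le x x_in; lra.
have := taylor x y x_in y_in; have := vnorm_ge0 (vsub y x).
have := Rmult_le_compat_r _ _ _ (vnorm_ge0 (vsub y x)) (G_le x x_in).
move=> *; split_Rabs; nra.
Qed.

Lemma l1norm_le_add x y : l1norm y <= l1norm x + l1norm (vsub y x).
Proof.
rewrite /l1norm -big_split; apply: sumR_le => i /=.
by have := Rabs_triang (x i) (vsub y x i); rewrite /vsub; ring_simplify (x i + (y i - x i)).
Qed.

Lemma locally_bounded_of_continuous_at (H : vec n -> 'I_n -> vec n) c r : 0 < r ->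
  (forall eps, 0 < eps -> exists d, 0 < d /\ forall y, vnorm (vsub y c) < r ->
     vnorm (vsub y c) < d -> forall i j, Rabs (H y i j - H c i j) < eps) ->
  exists rho B, 0 < rho <= r /\ 0 <= B /\
    forall y, vnorm (vsub y c) < rho -> forall i, l1norm (H y i) <= B.
Proof.
move=> r_gt0 H_cont; have [d [d_gt0 near_H]] := H_cont 1 Rlt_0_1.
set S := \big[Rplus/0]_(i < n) l1norm (H c i).
have S_ge0 : 0 <= S by apply: sumR_ge0 => i; apply: l1norm_ge0.
exists (Rmin r d), (INR n * (S + 1)); split; first by split; [apply: Rmin_glb_lt | apply: Rmin_l].
split; first by have := pos_INR n; nra.
move=> y y_in i; apply: l1norm_le_const => j.
have := near_H y ltac:(have := Rmin_l r d; lra) ltac:(have := Rmin_r r d; lra) i j.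
have := sumR_term_le (fun j => Rabs (H c i j)) j (fun _ => Rabs_pos _).
have := sumR_term_le (fun i => l1norm (H c i)) i (fun _ => l1norm_ge0 _).
rewrite -/(l1norm (H c i)) -/S.
by move=> *; split_Rabs; lra.
Qed.

Lemma C2_on_quad_approx f c r : 0 < r -> C2_on f c r ->
  exists G rho K, 0 < rho /\ quad_approx f G c rho K.
Proof.
move=> r_gt0 [G [H [grad_f [grad_G H_cont]]]].
have [rho [B [[rho_gt0 rho_le] [B_ge0 H_le]]]] :=
  locally_bounded_of_continuous_at H c r r_gt0 (H_cont c ltac:(rewrite vsub_self; lra)).
have in_r z : vnorm (vsub z c) < rho -> vnorm (vsub z c) < r by lra.
have G_lip z w : vnorm (vsub z c) < rho -> vnorm (vsub w c) < rho ->
    l1norm (vsub (G w) (G z)) <= INR n * B * vnorm (vsub w z).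
  move=> z_in w_in; rewrite Rmult_assoc; apply: l1norm_le_const => i.
  apply: (lipschitz_of_grad_bound (fun z => G z i) (fun z => H z i) c rho) => //.
    by move=> u u_in; apply: grad_G; apply: in_r.
  by move=> u u_in; apply: H_le.
have nB_ge0 : 0 <= INR n * B by have := pos_INR n; nra.
exists G, rho, (l1norm (G c) + INR n * B * rho + INR n * B); split=> //; split.
  move=> y y_in; have := l1norm_le_add (G c) (G y).
  have := G_lip c y ltac:(rewrite vsub_self; lra) y_in.
  by have := vnorm_ge0 (vsub y c); nra.
move=> x y x_in y_in.
apply: Rle_trans (taylor_of_grad_lipschitz f G c rho (INR n * B) x y nB_ge0
   (fun z z_in => grad_f z (in_r z z_in)) G_lip x_in y_in) _.
apply: Rmult_le_compat_r; first by have := vnorm_ge0 (vsub y x); nra.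
by have := l1norm_ge0 (G c); nra.
Qed.

End QuadApprox.

Lemma uniform_on_finite_family (I : finType) (A : Type) (P : I -> A -> R -> R -> Prop) :
  (forall i a r K r' K', P i a r K -> 0 < r' <= r -> K <= K' -> P i a r' K') ->
  (forall i, exists a r K, 0 < r /\ P i a r K) ->
  exists (w : I -> A) r K, 0 < r /\ 0 <= K /\ forall i, P i (w i) r K.
Proof.
move=> P_mono P_ex.
have P_ex' i : exists t : A * (R * R), 0 < t.2.1 /\ P i t.1 t.2.1 t.2.2.
  by have [a [r [K PaRK]]] := P_ex i; exists (a, (r, K)).
pose t i := proj1_sig (constructive_indefinite_description _ (P_ex' i)).
have Pt i : 0 < (t i).2.1 /\ P i (t i).1 (t i).2.1 (t i).2.2.
  exact: proj2_sig (constructive_indefinite_description _ (P_ex' i)).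
set S := \big[Rplus/0]_i / (t i).2.1.
have inv_ge0 i : 0 <= / (t i).2.1 by apply: Rlt_le; apply: Rinv_0_lt_compat; exact: (proj1 (Pt i)).
have S_ge0 : 0 <= S by apply: sumR_ge0.
exists (fun i => (t i).1), (/ (S + 1)), (\big[Rplus/0]_i Rabs (t i).2.2).
split; first by apply: Rinv_0_lt_compat; lra.
split; first by apply: sumR_ge0 => i; apply: Rabs_pos.
move=> i; have [r_gt0 Pi] := Pt i; apply: (P_mono _ _ _ _ _ _ Pi).
  split; first by apply: Rinv_0_lt_compat; lra.
  rewrite -(Rinv_inv (t i).2.1); apply: Rinv_le_contravar; first exact: Rinv_0_lt_compat.
  by have := sumR_term_le _ i inv_ge0; rewrite -/S; lra.
have := sumR_term_le (fun i => Rabs (t i).2.2) i (fun _ => Rabs_pos _).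
by have := Rle_abs (t i).2.2; lra.
Qed.

Lemma C2_family_quad_approx {n m} (g0 : vec n -> R) (gr : vec n -> vec m) c r :
  0 < r -> C2_on g0 c r -> (forall j, C2_on (fun x => gr x j) c r) ->
  exists (G0 : vec n -> vec n) (Gr : 'I_m -> vec n -> vec n) rho K,
    0 < rho /\ 0 <= K /\ quad_approx g0 G0 c rho K /\
    forall j, quad_approx (fun x => gr x j) (Gr j) c rho K.
Proof.
move=> r_gt0 C2_g0 C2_gr.
pose f (o : option 'I_m) := if o is Some j then (fun x => gr x j) else g0.
have [w [rho [K [rho_gt0 [K_ge0 quad_w]]]]] :=
  uniform_on_finite_family _ _ (fun o G rho K => quad_approx (f o) G c rho K)
    (fun o G r K r' K' q r'_le K_le => quad_approx_mono _ _ _ _ _ _ _ q (proj2 r'_le) K_le)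
    (fun o => C2_on_quad_approx (f o) c r r_gt0 (if o is Some j then C2_gr j else C2_g0)).
exists (w None), (fun j => w (Some j)), rho, K.
by do 3!split=> //; [apply: (quad_w None) | move=> j; apply: (quad_w (Some j))].
Qed.

Section Gradients.
Context {n : nat}.
Implicit Types (f : vec n -> R) (x y v w : vec n).

Lemma has_grad_of_quadratic_bound f x v C r : 0 < r ->
  (forall y, vnorm (vsub y x) < r ->
     Rabs (f y - f x - vdot v (vsub y x)) <= C * (vnorm (vsub y x) * vnorm (vsub y x))) ->
  has_grad f x v.
Proof.
move=> r_gt0 quad eps eps_gt0; have C_le := Rle_abs C; have absC_ge0 := Rabs_pos C.
have e_gt0 : 0 < eps / (Rabs C + 1) by apply: Rdiv_lt_0_compat; lra.
exists (Rmin r (eps / (Rabs C + 1))); split; first exact: Rmin_glb_lt.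
move=> y y_near; have := Rmin_l r (eps / (Rabs C + 1)); have := Rmin_r r (eps / (Rabs C + 1)).
move=> le_e le_r; have d_ge0 := vnorm_ge0 (vsub y x).
have Cd_le : Rabs C * vnorm (vsub y x) <= eps.
  have -> : eps = (Rabs C + 1) * (eps / (Rabs C + 1)) by field; lra.
  by nra.
by apply: Rle_trans (quad y ltac:(lra)) _; nra.
Qed.

Lemma has_grad_unique f x v w : has_grad f x v -> has_grad f x w -> v = w.
Proof.
move=> grad_v grad_w; set u := vsub v w.
suff u0 : vnorm u = 0.
  apply: functional_extensionality => i.
  by have := f_equal (fun z => z i) (vnorm_eq0 _ u0); rewrite /u /vsub /vzero; lra.
have := vnorm_ge0 u; case: (Req_dec (vnorm u) 0) => // u_neq0 u_ge0.
(* along the ray x + t u the two first-order expansions differ by t |u|^2 *)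
have eps_gt0 : 0 < vnorm u / 4 by lra.
have [d1 [d1_gt0 near_v]] := grad_v _ eps_gt0; have [d2 [d2_gt0 near_w]] := grad_w _ eps_gt0.
set t := Rmin d1 d2 / (2 * vnorm u).
have t_gt0 : 0 < t by apply: Rdiv_lt_0_compat; [apply: Rmin_glb_lt | lra].
have step : vnorm (vsub (ray x u t) x) = t * vnorm u.
  by rewrite ray_sub_base vnorm_scale Rabs_right; lra.
have step_lt : t * vnorm u < Rmin d1 d2.
  by rewrite /t; field_simplify; [have := Rmin_glb_lt d1 d2 0 d1_gt0 d2_gt0; lra | lra].
have := near_v (ray x u t) ltac:(rewrite step; have := Rmin_l d1 d2; lra).
have := near_w (ray x u t) ltac:(rewrite step; have := Rmin_r d1 d2; lra).
rewrite step ray_sub_base !vdot_scaler.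
have uu : t * vdot v u - t * vdot w u = t * (vnorm u * vnorm u).
  by rewrite -Rmult_minus_distr_l -vdot_subl vnorm_sqr.
move=> le_w le_v; exfalso.
have : t * (vnorm u * vnorm u) <= vnorm u / 4 * (t * vnorm u) * 2 by split_Rabs; lra.
have : 0 < t * vnorm u by nra.
nra.
Qed.

End Gradients.

Lemma norm_taylor {m} (a c : vec m) : 0 < vnorm a ->
  Rabs (vnorm c - vnorm a - vdot a (vsub c a) / vnorm a) <=
    vnorm (vsub c a) * vnorm (vsub c a) / vnorm a.
Proof.
move=> a_gt0; rewrite vnorm_sqr.
set N := vnorm a; set D := vdot a (vsub c a); set B := vdot (vsub c a) (vsub c a).
set Nc := vnorm c; have N_gt0 : 0 < N := a_gt0.
have c_split : c = (fun i => a i + 1 * vsub c a i).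
  by apply: functional_extensionality => i; rewrite /vsub; ring.
have Nc_sqr : Nc * Nc = N * N + 2 * D + B.
  by rewrite /Nc vnorm_sqr {1 2}c_split vdot_expand /N vnorm_sqr /D /B; ring.
have ac : vdot a c = N * N + D.
  by rewrite /D vdot_subr /N vnorm_sqr; ring.
have B_ge0 : 0 <= B by apply: vdot_ge0.
have Nc_ge0 : 0 <= Nc by apply: vnorm_ge0.
(* N * Nc lies between <a, c> = N^2 + D (Cauchy-Schwarz) and N^2 + D + B *)
have lo : N * N + D <= N * Nc.
  by have := Cauchy_Schwarz a c; have := Rle_abs (vdot a c); rewrite -/N -/Nc; lra.
have hi : N * Nc <= N * N + D + B.
  apply: Rsqr_incr_0_var; last nra.
  have -> : Rsqr (N * Nc) = N * N * (Nc * Nc) by rewrite /Rsqr; ring.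
  by rewrite Nc_sqr /Rsqr; have := Rmult_le_pos _ _ (Rle_0_sqr N) B_ge0; nra.
have -> : Nc - N - D / N = (N * Nc - N * N - D) / N by field; lra.
rewrite /Rdiv Rabs_mult Rabs_inv (Rabs_right N) ?(Rabs_right (N * Nc - N * N - D)); try lra.
by apply: Rmult_le_compat_r; [apply: Rlt_le; apply: Rinv_0_lt_compat | lra].
Qed.

Lemma norm_comp_model {m} (a c j : vec m) A B : 0 < vnorm a ->
  vnorm (vsub (vsub c a) j) <= B -> vnorm j <= A ->
  Rabs (vnorm c - vnorm a - vdot a j / vnorm a) <= (A + B) * (A + B) / vnorm a + B.
Proof.
move=> a_gt0 rem_le j_le.
have ca_le : vnorm (vsub c a) <= A + B.
  have -> : vsub c a = (fun i => vsub (vsub c a) j i + j i).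
    by apply: functional_extensionality => i; rewrite /vsub; ring.
  by apply: Rle_trans (vnorm_add_le _ _) _; lra.
have sq_le : vnorm (vsub c a) * vnorm (vsub c a) / vnorm a <= (A + B) * (A + B) / vnorm a.
  apply: Rmult_le_compat_r; first by apply: Rlt_le; apply: Rinv_0_lt_compat.
  by have := vnorm_ge0 (vsub c a); nra.
have lin_le : Rabs (vdot a (vsub c a) / vnorm a - vdot a j / vnorm a) <= B.
  have -> : vdot a (vsub c a) / vnorm a - vdot a j / vnorm a
          = vdot a (vsub (vsub c a) j) / vnorm a by rewrite (vdot_subr a (vsub c a) j); field; lra.
  rewrite /Rdiv Rabs_mult Rabs_inv (Rabs_right (vnorm a)); last lra.
  apply: (Rmult_le_reg_l (vnorm a)) => //.
  have -> : vnorm a * (Rabs (vdot a (vsub (vsub c a) j)) * / vnorm a)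
          = Rabs (vdot a (vsub (vsub c a) j)) by field; lra.
  by have := Cauchy_Schwarz a (vsub (vsub c a) j); nra.
have := norm_taylor a c a_gt0; move: lin_le sq_le.
by set u := vdot a (vsub c a) / vnorm a; set w := vdot a j / vnorm a => *; split_Rabs; lra.
Qed.

(* the transposed Jacobian J^T a, the rows of J being the gradients [J j] *)
Definition jac_tmul {n m} (J : 'I_m -> vec n) (a : vec m) : vec n :=
  fun i => \big[Rplus/0]_(j < m) (a j * J j i).

Lemma vdot_jac_tmul {n m} (J : 'I_m -> vec n) (a : vec m) d :
  vdot (jac_tmul J a) d = vdot a (fun j => vdot (J j) d).
Proof.
rewrite /vdot /jac_tmul; under eq_bigr do rewrite big_distrl /=.
rewrite exchange_big /=; apply: eq_bigr => j _.
by rewrite big_distrr /=; apply: eq_bigr => i _; ring.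
Qed.

Lemma IVT_lipschitz (f : R -> R) T L : 0 <= T -> 0 <= L ->
  (forall s t, 0 <= s <= T -> 0 <= t <= T -> Rabs (f s - f t) <= L * Rabs (s - t)) ->
  f 0 * f T <= 0 -> exists z, 0 <= z <= T /\ f z = 0.
Proof.
move=> T_ge0 L_ge0 f_lip sign_change.
(* IVT_cor wants continuity on all of R: precompose f with the clamp onto [0, T] *)
pose clamp t := Rmax 0 (Rmin T t).
have clamp_in t : 0 <= clamp t <= T by rewrite /clamp /Rmax /Rmin; do 2!case: Rle_dec; lra.
have clamp_id t : 0 <= t <= T -> clamp t = t.
  by rewrite /clamp /Rmax /Rmin; do 2!case: Rle_dec; lra.
have clamp_lip s t : Rabs (clamp s - clamp t) <= Rabs (s - t).
  by rewrite /clamp /Rmax /Rmin; do 4!case: Rle_dec; split_Rabs; lra.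
have cont : continuity (fun t => f (clamp t)).
  move=> x eps eps_gt0; exists (eps / (L + 1)); split; first by apply: Rdiv_lt_0_compat; lra.
  move=> y [_ yx_lt]; rewrite /dist /= /R_dist in yx_lt *.
  apply: Rle_lt_trans (f_lip _ _ (clamp_in y) (clamp_in x)) _.
  have := Rmult_le_compat_l _ _ _ L_ge0 (clamp_lip y x).
  have : L * (eps / (L + 1)) < eps.
    have -> : L * (eps / (L + 1)) = eps * (L / (L + 1)) by field; lra.
    have : L / (L + 1) < 1 by apply: (Rmult_lt_reg_r (L + 1)); [lra | field_simplify; lra].
    by nra.
  by nra.
have [z [z_in fz0]] := IVT_cor _ 0 T cont T_ge0 ltac:(by rewrite /= !clamp_id //; lra).
by exists z; rewrite -(clamp_id z).
Qed.

Lemma unit_descent_direction {n} (v : vec n) a : 0 < vnorm v ->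
  exists w, vnorm w = 1 /\ a * vdot v w = - (Rabs a * vnorm v).
Proof.
move=> v_gt0.
have [s [s_abs s_a]] : exists s, Rabs s = 1 /\ s * a = Rabs a.
  by case: (Rle_dec 0 a) => ?; [exists 1 | exists (-1)]; split_Rabs; lra.
exists (fun i => - s / vnorm v * v i); split.
  rewrite vnorm_scale /Rdiv Rabs_mult Rabs_Ropp Rabs_inv s_abs (Rabs_right (vnorm v)); last lra.
  by field; lra.
by rewrite vdot_scaler -vnorm_sqr -s_a; field; lra.
Qed.

Section ZeroNearby.
Context {n : nat}.
Variables (h : vec n -> R) (x0 v : vec n) (C L rho delta : R).
Hypotheses (delta_gt0 : 0 < delta) (delta_le : delta <= vnorm v) (L_ge0 : 0 <= L).
Hypothesis h_lip : forall x y, vnorm (vsub x x0) < rho -> vnorm (vsub y x0) < rho ->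
  Rabs (h y - h x) <= L * vnorm (vsub y x).
Hypothesis h_model : forall y, vnorm (vsub y x0) < rho ->
  Rabs (h y - h x0 - vdot v (vsub y x0)) <= C * (vnorm (vsub y x0) * vnorm (vsub y x0)).

Let T := 2 * Rabs (h x0) / delta.
Hypotheses (T_lt : T < rho) (CT_le : C * T <= delta / 2).

(* A step of length T along the descent direction overshoots the zero: the linear
   part moves h by at least T delta = 2|h x0|, the remainder by at most |h x0|. *)
Lemma zero_of_quadratic_model : exists xt, h xt = 0 /\ vnorm (vsub xt x0) <= T.
Proof.
have T_ge0 : 0 <= T by apply: Rmult_le_pos; [have := Rabs_pos (h x0); lra |
  apply: Rlt_le; apply: Rinv_0_lt_compat].
have T_delta : T * delta = 2 * Rabs (h x0) by rewrite /T; field; lra.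
have [w [w1 descent]] := unit_descent_direction v (h x0) ltac:(lra).
have dist t : 0 <= t -> vnorm (vsub (ray x0 w t) x0) = t.
  by move=> t_ge0; rewrite ray_sub_base vnorm_scale w1 Rabs_right; lra.
pose phi t := h (ray x0 w t).
have phi_lip t1 t2 : 0 <= t1 <= T -> 0 <= t2 <= T -> Rabs (phi t1 - phi t2) <= L * Rabs (t1 - t2).
  move=> t1_in t2_in; rewrite /phi.
  have := h_lip (ray x0 w t2) (ray x0 w t1) ltac:(rewrite dist; lra) ltac:(rewrite dist; lra).
  by rewrite ray_sub vnorm_scale w1 Rmult_1_r.
have phiT : h x0 * phi T <= 0.
  have := h_model (ray x0 w T) ltac:(rewrite dist; lra).
  rewrite dist // ray_sub_base vdot_scaler /phi.
  set e := h (ray x0 w T) - h x0 - T * vdot v w => e_le.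
  have e_small : Rabs e <= Rabs (h x0).
    by have := Rmult_le_compat_r _ _ _ T_ge0 CT_le; lra.
  have -> : h x0 * h (ray x0 w T) = h x0 * h x0 + T * (h x0 * vdot v w) + h x0 * e.
    by rewrite /e; ring.
  rewrite descent; have -> : h x0 * h x0 = Rabs (h x0) * Rabs (h x0).
    by rewrite -Rabs_mult Rabs_right //; nra.
  have : T * delta * Rabs (h x0) <= T * vnorm v * Rabs (h x0).
    by apply: Rmult_le_compat_r; [apply: Rabs_pos | apply: Rmult_le_compat_l].
  have := Rle_abs (h x0 * e); rewrite Rabs_mult.
  have := Rmult_le_compat_l _ _ _ (Rabs_pos (h x0)) e_small.
  by nra.
have [z [z_in phi_z]] := IVT_lipschitz phi T L T_ge0 L_ge0 phi_lip
  ltac:(by rewrite /phi ray0; rewrite /phi in phiT).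
by exists (ray x0 w z); split; [exact: phi_z | rewrite dist; lra].
Qed.

End ZeroNearby.

Lemma step_size_choice delta M c1 c2 : 0 < delta -> 0 <= M -> 0 <= c1 -> 0 <= c2 ->
  exists eps, 0 < eps /\ forall N rho a, 0 < N <= M * rho -> rho <= 1 -> Rabs a < eps * N ->
    2 * Rabs a / delta < rho /\ (c1 / N + c2) * (2 * Rabs a / delta) <= delta / 2.
Proof.
move=> delta_gt0 M_ge0 c1_ge0 c2_ge0.
set e1 := delta / (4 * (M + 1)); set e2 := delta * delta / (4 * (c1 + c2 * M + 1)).
have e1_gt0 : 0 < e1 by apply: Rdiv_lt_0_compat; lra.
have e2_gt0 : 0 < e2 by apply: Rdiv_lt_0_compat; nra.
exists (Rmin e1 e2); split; first exact: Rmin_glb_lt.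
set eps := Rmin e1 e2; move=> N rho a [N_gt0 N_le] rho_le a_lt.
have eps1 : eps * (4 * (M + 1)) <= delta.
  have -> : delta = e1 * (4 * (M + 1)) by rewrite /e1; field; lra.
  by apply: Rmult_le_compat_r; [lra | apply: Rmin_l].
have eps2 : eps * (4 * (c1 + c2 * M + 1)) <= delta * delta.
  have -> : delta * delta = e2 * (4 * (c1 + c2 * M + 1)) by rewrite /e2; field; nra.
  by apply: Rmult_le_compat_r; [nra | apply: Rmin_r].
have eps_gt0 : 0 < eps by apply: Rmin_glb_lt.
have rho_gt0 : 0 < rho by nra.
have N_leM : N <= M by nra.
split.
  apply: (Rmult_lt_reg_r delta) => //; rewrite /Rdiv Rmult_assoc Rinv_l; last lra.
  by nra.
have a_le : (c1 / N + c2) * Rabs a <= eps * (c1 + c2 * M).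
  have -> : eps * (c1 + c2 * M) = (c1 / N + c2) * (eps * N) + eps * c2 * (M - N).
    by field; lra.
  have c_ge0 : 0 <= c1 / N + c2.
    by apply: Rplus_le_le_0_compat => //; apply: Rmult_le_pos => //;
      apply: Rlt_le; apply: Rinv_0_lt_compat.
  have := Rmult_le_compat_l _ _ _ c_ge0 (Rlt_le _ _ a_lt).
  have : 0 <= eps * c2 * (M - N) by apply: Rmult_le_pos; [nra | lra].
  lra.
apply: (Rmult_le_reg_r delta) => //.
have -> : (c1 / N + c2) * (2 * Rabs a / delta) * delta = 2 * ((c1 / N + c2) * Rabs a).
  by field; lra.
by nra.
Qed.

Definition hfun_grad {n m} (G0 : vec n) (Gr : 'I_m -> vec n) (a : vec m) : vec n :=
  fun i => jac_tmul Gr a i / vnorm a - G0 i.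

Lemma vdot_hfun_grad {n m} (G0 : vec n) (Gr : 'I_m -> vec n) (a : vec m) d :
  vdot (hfun_grad G0 Gr a) d = vdot a (fun j => vdot (Gr j) d) / vnorm a - vdot G0 d.
Proof.
have -> : hfun_grad G0 Gr a = (fun i => / vnorm a * jac_tmul Gr a i + (-1) * G0 i).
  by apply: functional_extensionality => i; rewrite /hfun_grad /Rdiv; ring.
by rewrite vdot_sym vdot_linr !(vdot_sym d) vdot_jac_tmul /Rdiv; ring.
Qed.

Section HfunNearZero.
Context {n m : nat}.
Variables (g0 : vec n -> R) (gr : vec n -> vec m) (xbar : vec n).
Variables (G0 : vec n -> vec n) (Gr : 'I_m -> vec n -> vec n) (r K : R).
Hypotheses (r_gt0 : 0 < r) (K_ge0 : 0 <= K).
Hypothesis quad_g0 : quad_approx g0 G0 xbar r K.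
Hypothesis quad_gr : forall j, quad_approx (fun x => gr x j) (Gr j) xbar r K.
Hypothesis gr_xbar : gr xbar = vzero m.

Lemma gr_lipschitz x y : vnorm (vsub x xbar) < r -> vnorm (vsub y xbar) < r ->
  vnorm (vsub (gr y) (gr x)) <= INR m * (K * (1 + 2 * r)) * vnorm (vsub y x).
Proof.
move=> x_in y_in; apply: Rle_trans (vnorm_le_l1norm _) _.
rewrite Rmult_assoc; apply: l1norm_le_const => j.
exact: quad_approx_lipschitz (quad_gr j) x_in y_in.
Qed.

Lemma hfun_lipschitz x y : vnorm (vsub x xbar) < r -> vnorm (vsub y xbar) < r ->
  Rabs (hfun g0 gr y - hfun g0 gr x)
    <= (INR m * (K * (1 + 2 * r)) + K * (1 + 2 * r)) * vnorm (vsub y x).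
Proof.
move=> x_in y_in; rewrite /hfun.
have := Rle_trans _ _ _ (vnorm_sub_le (gr y) (gr x)) (gr_lipschitz x y x_in y_in).
have := quad_approx_lipschitz g0 G0 xbar r K x y quad_g0 x_in y_in.
by move=> *; split_Rabs; lra.
Qed.

Lemma hfun_model x0 y : vnorm (vsub x0 xbar) < r -> vnorm (vsub y xbar) < r ->
  gr x0 <> vzero m -> vnorm (vsub y x0) <= 1 ->
  Rabs (hfun g0 gr y - hfun g0 gr x0
        - vdot (hfun_grad (G0 x0) (fun j => Gr j x0) (gr x0)) (vsub y x0))
  <= (4 * (INR m * K * (INR m * K)) / vnorm (gr x0) + (INR m * K + K))
     * (vnorm (vsub y x0) * vnorm (vsub y x0)).
Proof.
move=> x0_in y_in gr_x0.
set d := vsub y x0; set dd := vnorm d; set N := vnorm (gr x0); set mK := INR m * K.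
move=> near.
have N_gt0 : 0 < N by apply: vnorm_gt0.
have dd_ge0 : 0 <= dd by apply: vnorm_ge0.
have mK_ge0 : 0 <= mK by have := pos_INR m; rewrite /mK; nra.
set J := fun j => vdot (Gr j x0) d.
have rem_le : vnorm (vsub (vsub (gr y) (gr x0)) J) <= mK * (dd * dd).
  apply: Rle_trans (vnorm_le_l1norm _) _; rewrite /mK Rmult_assoc.
  by apply: l1norm_le_const => j; apply: (proj2 (quad_gr j)).
have J_le : vnorm J <= mK * dd.
  apply: Rle_trans (vnorm_le_l1norm _) _; rewrite /mK Rmult_assoc.
  apply: l1norm_le_const => j; apply: Rle_trans (Rabs_vdot_le_l1norm _ _) _.
  by apply: Rmult_le_compat_r => //; apply: (proj1 (quad_gr j)).
have AB_le : (mK * dd + mK * (dd * dd)) * (mK * dd + mK * (dd * dd)) / N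
             <= 4 * (mK * mK) / N * (dd * dd).
  have -> : 4 * (mK * mK) / N * (dd * dd) = 4 * (mK * mK) * (dd * dd) / N by field; lra.
  apply: Rmult_le_compat_r; first by apply: Rlt_le; apply: Rinv_0_lt_compat.
  have : mK * (dd * dd) <= mK * dd by apply: Rmult_le_compat_l => //; nra.
  have := Rmult_le_pos _ _ mK_ge0 dd_ge0; have := Rmult_le_pos _ _ mK_ge0 (Rmult_le_pos _ _ dd_ge0 dd_ge0).
  move=> *; have -> : 4 * (mK * mK) * (dd * dd) = (2 * (mK * dd)) * (2 * (mK * dd)) by ring.
  by apply: Rmult_le_compat; lra.
have norm_part := norm_comp_model (gr x0) (gr y) J _ _ N_gt0 rem_le J_le.
have g0_part := proj2 quad_g0 x0 y x0_in y_in.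
rewrite vdot_hfun_grad /hfun -/d -/dd -/N -/J.
have -> : (4 * (mK * mK) / N + (mK + K)) * (dd * dd)
        = 4 * (mK * mK) / N * (dd * dd) + mK * (dd * dd) + K * (dd * dd) by ring.
move: norm_part g0_part AB_le; rewrite -/N -/d -/dd.
have -> : vnorm (gr y) - g0 y - (N - g0 x0) - (vdot (gr x0) J / N - vdot (G0 x0) d)
        = (vnorm (gr y) - N - vdot (gr x0) J / N) - (g0 y - g0 x0 - vdot (G0 x0) d) by ring.
by move=> *; split_Rabs; lra.
Qed.

Lemma hfun_zero_near delta : 0 < delta ->
  exists eps, 0 < eps /\ exists rho, 0 < rho /\
    forall x0 : vec n, vnorm (vsub x0 xbar) < rho -> gr x0 <> vzero m ->
      Rabs (hfun g0 gr x0) < eps * vnorm (gr x0) ->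
      (exists v, has_grad (hfun g0 gr) x0 v /\ delta <= vnorm v) ->
      exists xt : vec n, hfun g0 gr xt = 0 /\
        vnorm (vsub xt x0) <= 2 * Rabs (hfun g0 gr x0) / delta.
Proof.
move=> delta_gt0; set Lg := K * (1 + 2 * r); set mK := INR m * K.
have Lg_ge0 : 0 <= Lg by rewrite /Lg; nra.
have mLg_ge0 : 0 <= INR m * Lg by have := pos_INR m; nra.
have mK_ge0 : 0 <= mK by have := pos_INR m; rewrite /mK; nra.
have [eps [eps_gt0 step]] := step_size_choice delta (INR m * Lg) (4 * (mK * mK)) (mK + K)
  delta_gt0 mLg_ge0 ltac:(nra) ltac:(lra).
exists eps; split=> //; set rho := Rmin (r / 2) 1.
have [rho_le_r rho_le1] : rho <= r / 2 /\ rho <= 1 by split; [apply: Rmin_l | apply: Rmin_r].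
have rho_gt0 : 0 < rho by apply: Rmin_glb_lt; lra.
exists rho; split=> //.
move=> x0 x0_near gr_x0 h_small [v [grad_v v_ge]].
have in_r y : vnorm (vsub y x0) < rho -> vnorm (vsub y xbar) < r.
  by move=> y_near; have := vsub_triangle y x0 xbar; lra.
have x0_in : vnorm (vsub x0 xbar) < r by lra.
have N_le : vnorm (gr x0) <= INR m * Lg * rho.
  have := gr_lipschitz xbar x0 ltac:(rewrite vsub_self; lra) x0_in.
  rewrite gr_xbar vsub0 -/Lg => le; apply: Rle_trans le _.
  by apply: Rmult_le_compat_l => //; lra.
have [T_lt CT_le] := step _ _ _ (conj (vnorm_gt0 _ gr_x0) N_le) rho_le1 h_small.
have model y : vnorm (vsub y x0) < rho -> _ :=
  fun y_near => hfun_model x0 y x0_in (in_r y y_near) gr_x0 ltac:(lra).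
have v_eq := has_grad_unique _ _ _ _ grad_v (has_grad_of_quadratic_bound _ _ _ _ _ rho_gt0 model).
rewrite v_eq in v_ge.
apply: (zero_of_quadratic_model _ _ _ _ (INR m * Lg + Lg) rho _ delta_gt0 v_ge _ _ model
  T_lt CT_le); first lra.
by move=> x y x_near y_near; apply: hfun_lipschitz; apply: in_r.
Qed.

End HfunNearZero.

Theorem lemma5p3 (n m : nat) (Hn : (1 <= n)%nat) (Hm : (1 <= m)%nat)
  (g0 : vec n -> R) (gr : vec n -> vec m) (xbar : vec n)
  (Hsmooth : exists r, 0 < r /\ C2_on g0 xbar r /\
                       forall j : 'I_m, C2_on (fun x => gr x j) xbar r)
  (Hg0 : g0 xbar = 0) (Hgr : gr xbar = vzero m) :
  forall delta, 0 < delta ->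
  exists eps, 0 < eps /\ exists rho, 0 < rho /\
    forall x0 : vec n, vnorm (vsub x0 xbar) < rho ->
      gr x0 <> vzero m ->
      Rabs (hfun g0 gr x0) < eps * vnorm (gr x0) ->
      (exists v, has_grad (hfun g0 gr) x0 v /\ delta <= vnorm v) ->
      exists xt : vec n, hfun g0 gr xt = 0 /\
        vnorm (vsub xt x0) <= 2 * Rabs (hfun g0 gr x0) / delta.
Proof.
move=> delta delta_gt0; have [r [r_gt0 [C2_g0 C2_gr]]] := Hsmooth.
have [G0 [Gr [rho [K [rho_gt0 [K_ge0 [quad_g0 quad_gr]]]]]]] :=
  C2_family_quad_approx g0 gr xbar r r_gt0 C2_g0 C2_gr.
exact: (hfun_zero_near g0 gr xbar G0 Gr rho K rho_gt0 K_ge0 quad_g0 quad_gr Hgr delta delta_gt0).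
Qed.
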